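(* Let $G$ and $H$ be finite simple graphs. If $G$ or $H$ is a cover graph, then the direct product $G \times H$ is a cover graph.
   Context: A graph is a cover graph if it is the underlying (undirected) graph of the Hasse diagram of some finite partially ordered set. The direct product $G \times H$ has vertex set $V(G)\times V(H)$, with $(g_i,h_s)$ adjacent to $(g_j,h_t)$ if and only if $g_ig_j \in E(G)$ and $h_sh_t \in E(H)$. *)

From mathcomp Require Import all_boot.
Set Implicit Arguments. Unset Strict Implicit. Unset Printing Implicit Defensive.

Definition simple_graph (T : finType) (e : rel T) : Prop :=
  symmetric e /\ irreflexive e.

Definition strict_porder (T : finType) (lt : rel T) : Prop :=
  irreflexive lt /\ transitive lt.

Definition covers (T : finType) (lt : rel T) (x y : T) : bool :=
  lt x y && [forall z, ~~ (lt x z && lt z y)].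

Definition cover_graph (T : finType) (e : rel T) : Prop :=
  exists lt : rel T, strict_porder lt /\
    forall x y, e x y = covers lt x y || covers lt y x.

Definition direct_prod (T1 T2 : finType) (e1 : rel T1) (e2 : rel T2) : rel (T1 * T2) :=
  fun u v => e1 u.1 v.1 && e2 u.2 v.2.

From mathcomp Require Import all_boot.

(* If every edge of a symmetric graph G is sent by a map f to a covering pair
   of a strict order < on S, orient each edge upwards along f and take the
   transitive closure of these arcs.  Since f is strictly monotone along arcs,
   the closure is a strict order, and an arc u -> v is a cover for it: a vertex
   strictly between u and v would map strictly between f u and f v.  Conversely
   a cover of the closure must be a single arc.  For G x H, projecting onto the
   factor that is a cover graph gives such a map. *)

Section CoverGraphPullback.

Variables (T S : finType) (e : rel T) (f : T -> S) (lt0 : rel S).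
Hypothesis lt0_po : strict_porder lt0.
Hypothesis e_sym : symmetric e.
Hypothesis e_covers :
  forall u v, e u v -> covers lt0 (f u) (f v) || covers lt0 (f v) (f u).

Let lt0_irr : irreflexive lt0 := proj1 lt0_po.
Let lt0_trans : transitive lt0 := proj2 lt0_po.

Let up : rel T := fun u v => e u v && covers lt0 (f u) (f v).
Let lt : rel T := fun u v => [exists w, up u w && connect up w v].

Lemma up_lt0 {u v} : up u v -> lt0 (f u) (f v).
Proof. by case/andP=> _ /andP[]. Qed.

Lemma connect_up_lt0 {u v} : connect up u v -> u = v \/ lt0 (f u) (f v).
Proof.
case/connectP=> p; elim: p u => [|w p IHp] u /=; first by move=> _ ->; left.
case/andP=> /up_lt0 lt_uw up_p def_v; right.
by case: (IHp w up_p def_v) => [<- // | lt_wv]; apply: lt0_trans lt_wv.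
Qed.

Lemma lt_lt0 {u v} : lt u v -> lt0 (f u) (f v).
Proof.
case/existsP=> w /andP[/up_lt0 lt_uw /connect_up_lt0[<- // | lt_wv]].
exact: lt0_trans lt_wv.
Qed.

Lemma connect_up_lt {u v} : connect up u v -> u = v \/ lt u v.
Proof.
case/connectP=> [[|w p]] /=; first by move=> _ ->; left.
case/andP=> up_uw up_p def_v; right; apply/existsP; exists w.
by rewrite up_uw; apply/connectP; exists p.
Qed.

Lemma lt_strict_porder : strict_porder lt.
Proof.
split=> [u | v u x].
  by apply/negbTE/negP=> /lt_lt0; rewrite lt0_irr.
case/existsP=> w /andP[up_uw conn_wv] /existsP[w' /andP[up_vw' conn_w'x]].
apply/existsP; exists w; rewrite up_uw.
exact: connect_trans conn_wv (connect_trans (connect1 up_vw') conn_w'x).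
Qed.

Lemma up_covers {u v} : up u v -> covers lt u v.
Proof.
move=> up_uv; apply/andP; split.
  by apply/existsP; exists v; rewrite up_uv connect0.
apply/forallP=> z; apply/negP=> /andP[/lt_lt0 lt_uz /lt_lt0 lt_zv].
by case/andP: up_uv => _ /andP[_ /forallP/(_ (f z))]; rewrite lt_uz lt_zv.
Qed.

Lemma covers_up {u v} : covers lt u v -> up u v.
Proof.
case/andP=> /existsP[w /andP[up_uw conn_wv]] /forallP no_between.
case: (connect_up_lt conn_wv) => [<- // | lt_wv].
have lt_uw : lt u w by apply/existsP; exists w; rewrite up_uw connect0.
by move: (no_between w); rewrite lt_uw lt_wv.
Qed.

Lemma cover_graph_pullback : cover_graph e.
Proof.
exists lt; split=> [|u v]; first exact: lt_strict_porder.
apply/idP/orP=> [e_uv | [] /covers_up/andP[] //]; last by rewrite e_sym.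
case/orP: (e_covers _ _ e_uv) => cov; [left | right; rewrite e_sym in e_uv];
  exact/up_covers/andP.
Qed.

End CoverGraphPullback.

Lemma direct_prod_sym {T1 T2 : finType} {e1 : rel T1} {e2 : rel T2} :
  symmetric e1 -> symmetric e2 -> symmetric (direct_prod e1 e2).
Proof. by move=> sym1 sym2 u v; rewrite /direct_prod sym1 sym2. Qed.

Theorem theorem4 (T1 T2 : finType) (e1 : rel T1) (e2 : rel T2) :
  simple_graph e1 -> simple_graph e2 ->
  cover_graph e1 \/ cover_graph e2 ->
  cover_graph (direct_prod e1 e2).
Proof.
move=> [sym1 _] [sym2 _]; have prod_sym := direct_prod_sym sym1 sym2.
case=> [[lt [lt_po e1_cov]] | [lt [lt_po e2_cov]]].
- apply: (@cover_graph_pullback _ _ _ fst _ lt_po prod_sym).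
  by move=> u v /andP[e1_uv _]; rewrite -e1_cov.
- apply: (@cover_graph_pullback _ _ _ snd _ lt_po prod_sym).
  by move=> u v /andP[_ e2_uv]; rewrite -e2_cov.
Qed.
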